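(* Let $P_1,P_2,P_3$ be points on a circle of radius $R$, and let $P_1',P_2',P_3'$ be points in $\mathbb R^2$ with $\|P_j'-P_k'\|\ge d$ for $j\ne k$, for some $d>0$, and $\|P_j-P_j'\|\le\delta$ for $j=1,2,3$, where $\delta\ge 0$. If $$\delta<\frac{d^2}{2\left(R+d+\sqrt{(R+d)^2-d^2}\right)},$$ then the points $P_1',P_2',P_3'$ are not collinear. *)

From Stdlib Require Import Reals.
Open Scope R_scope.

Definition pt := (R * R)%type.

Definition dist2 (p q : pt) : R :=
  sqrt ((fst p - fst q)^2 + (snd p - snd q)^2).

Definition on_circle (c : pt) (r : R) (p : pt) : Prop := dist2 p c = r.

Definition collinear (a b c : pt) : Prop :=
  (fst b - fst a) * (snd c - snd a) - (snd b - snd a) * (fst c - fst a) = 0.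

From Stdlib Require Import Reals Lra Psatz.
Open Scope R_scope.

(* Suppose Q1, Q2, Q3 lie on a line, and take coordinates with that line as the
   x-axis. Then each P_j lies in the strip |y| <= delta, and consecutive
   x-coordinates of the P_j (in the order of the Q_j along the line) are at
   least g = d - 2 delta apart. On the circle, y^2 = R^2 - (x - a)^2 has second
   divided difference -1 in x, while y^2 varies by at most 4 R delta inside the
   strip; together these force g^2 <= 4 R delta, which the bound on delta
   excludes. *)

Lemma Rabs_le_of_sqr_le (x e : R) : 0 <= e -> x ^ 2 <= e ^ 2 -> Rabs x <= e.
Proof. intros He Hx; apply Rabs_le; split; nra. Qed.

Lemma sqr_sub_sqr_le (u v r e : R) :
  Rabs (u - v) <= 2 * e -> Rabs u <= r -> Rabs v <= r -> u ^ 2 - v ^ 2 <= 4 * r * e.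
Proof.
  intros Huv Hu Hv.
  replace (u ^ 2 - v ^ 2) with ((u - v) * (u + v)) by ring.
  apply (Rle_trans _ (Rabs ((u - v) * (u + v)))); [apply Rle_abs |].
  rewrite Rabs_mult.
  pose proof (Rabs_triang u v). pose proof (Rabs_pos (u - v)). pose proof (Rabs_pos (u + v)).
  nra.
Qed.

Lemma circle_second_difference (a b r x1 y1 x2 y2 x3 y3 : R) :
  (x1 - a) ^ 2 + (y1 - b) ^ 2 = r ^ 2 ->
  (x2 - a) ^ 2 + (y2 - b) ^ 2 = r ^ 2 ->
  (x3 - a) ^ 2 + (y3 - b) ^ 2 = r ^ 2 ->
  (x3 - x2) * (x2 - x1) * (x3 - x1)
  = (x3 - x2) * ((y2 - b) ^ 2 - (y1 - b) ^ 2) + (x2 - x1) * ((y2 - b) ^ 2 - (y3 - b) ^ 2).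
Proof.
  intros C1 C2 C3.
  replace ((y1 - b) ^ 2) with (r ^ 2 - (x1 - a) ^ 2) by lra.
  replace ((y2 - b) ^ 2) with (r ^ 2 - (x2 - a) ^ 2) by lra.
  replace ((y3 - b) ^ 2) with (r ^ 2 - (x3 - a) ^ 2) by lra.
  ring.
Qed.

Lemma circle_strip_gap (a b r e g x1 y1 x2 y2 x3 y3 : R) :
  0 <= r -> 0 < g -> x1 + g <= x2 -> x2 + g <= x3 ->
  (x1 - a) ^ 2 + (y1 - b) ^ 2 = r ^ 2 ->
  (x2 - a) ^ 2 + (y2 - b) ^ 2 = r ^ 2 ->
  (x3 - a) ^ 2 + (y3 - b) ^ 2 = r ^ 2 ->
  Rabs y1 <= e -> Rabs y2 <= e -> Rabs y3 <= e ->
  g ^ 2 <= 4 * r * e.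
Proof.
  intros Hr Hg H12 H23 C1 C2 C3 E1 E2 E3.
  assert (Hrad : forall x y, (x - a) ^ 2 + (y - b) ^ 2 = r ^ 2 -> Rabs (y - b) <= r).
  { intros x y C; apply Rabs_le_of_sqr_le; [exact Hr |].
    pose proof (pow2_ge_0 (x - a)); lra. }
  assert (Hspread : forall y y', Rabs y <= e -> Rabs y' <= e -> Rabs (y - b - (y' - b)) <= 2 * e).
  { intros y y' Hy Hy'.
    replace (y - b - (y' - b)) with (y + - y') by ring.
    eapply Rle_trans; [apply Rabs_triang |]. rewrite Rabs_Ropp. lra. }
  assert (D21 : (y2 - b) ^ 2 - (y1 - b) ^ 2 <= 4 * r * e)
    by (apply sqr_sub_sqr_le; eauto).
  assert (D23 : (y2 - b) ^ 2 - (y3 - b) ^ 2 <= 4 * r * e)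
    by (apply sqr_sub_sqr_le; eauto).
  pose proof (circle_second_difference a b r x1 y1 x2 y2 x3 y3 C1 C2 C3) as Id.
  set (alpha := x3 - x2) in *; set (beta := x2 - x1) in *.
  assert (Hga : g <= alpha) by (unfold alpha; lra).
  assert (Hgb : g <= beta) by (unfold beta; lra).
  assert (Hprod : alpha * beta * (alpha + beta) <= 4 * r * e * (alpha + beta)).
  { replace (x3 - x1) with (alpha + beta) in Id by (unfold alpha, beta; ring).
    rewrite Id; nra. }
  assert (alpha * beta <= 4 * r * e) by nra.
  nra.
Qed.

Lemma Rabs_sub_ge_cases (x y g : R) : g <= Rabs (x - y) -> x + g <= y \/ y + g <= x.
Proof. split_Rabs; lra. Qed.

Lemma Rabs_sub_ge_perturb (x y s t d e : R) :
  d <= Rabs (s - t) -> Rabs (x - s) <= e -> Rabs (y - t) <= e -> d - 2 * e <= Rabs (x - y).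
Proof. split_Rabs; lra. Qed.

Lemma circle_strip_separated (a b r e g x1 y1 x2 y2 x3 y3 : R) :
  0 <= r -> 0 < g ->
  g <= Rabs (x1 - x2) -> g <= Rabs (x1 - x3) -> g <= Rabs (x2 - x3) ->
  (x1 - a) ^ 2 + (y1 - b) ^ 2 = r ^ 2 ->
  (x2 - a) ^ 2 + (y2 - b) ^ 2 = r ^ 2 ->
  (x3 - a) ^ 2 + (y3 - b) ^ 2 = r ^ 2 ->
  Rabs y1 <= e -> Rabs y2 <= e -> Rabs y3 <= e ->
  g ^ 2 <= 4 * r * e.
Proof.
  intros Hr Hg S12 S13 S23.
  destruct (Rabs_sub_ge_cases _ _ _ S12), (Rabs_sub_ge_cases _ _ _ S13),
    (Rabs_sub_ge_cases _ _ _ S23); intros; try lra.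
  all: first
    [ solve [apply (circle_strip_gap a b r e g x1 y1 x2 y2 x3 y3); assumption]
    | solve [apply (circle_strip_gap a b r e g x1 y1 x3 y3 x2 y2); assumption]
    | solve [apply (circle_strip_gap a b r e g x2 y2 x1 y1 x3 y3); assumption]
    | solve [apply (circle_strip_gap a b r e g x2 y2 x3 y3 x1 y1); assumption]
    | solve [apply (circle_strip_gap a b r e g x3 y3 x1 y1 x2 y2); assumption]
    | solve [apply (circle_strip_gap a b r e g x3 y3 x2 y2 x1 y1); assumption] ].
Qed.

Definition unit_vec (u : pt) : Prop := fst u ^ 2 + snd u ^ 2 = 1.

Definition along (o u : pt) (t : R) : pt := (fst o + t * fst u, snd o + t * snd u).

Definition coord_x (o u p : pt) : R := (fst p - fst o) * fst u + (snd p - snd o) * snd u.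

Definition coord_y (o u p : pt) : R := (snd p - snd o) * fst u - (fst p - fst o) * snd u.

Lemma dist2_sqr (p q : pt) : dist2 p q ^ 2 = (fst p - fst q) ^ 2 + (snd p - snd q) ^ 2.
Proof.
  apply pow2_sqrt.
  pose proof (pow2_ge_0 (fst p - fst q)); pose proof (pow2_ge_0 (snd p - snd q)); lra.
Qed.

Lemma dist2_nonneg (p q : pt) : 0 <= dist2 p q.
Proof. apply sqrt_pos. Qed.

Lemma coord_dist2 (o u p q : pt) : unit_vec u ->
  (coord_x o u p - coord_x o u q) ^ 2 + (coord_y o u p - coord_y o u q) ^ 2 = dist2 p q ^ 2.
Proof.
  unfold unit_vec, coord_x, coord_y; intros Hu; rewrite dist2_sqr.
  transitivity (((fst p - fst q) ^ 2 + (snd p - snd q) ^ 2) * (fst u ^ 2 + snd u ^ 2)); [ring |].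
  rewrite Hu; ring.
Qed.

Lemma coord_x_along (o u : pt) (t : R) : unit_vec u -> coord_x o u (along o u t) = t.
Proof.
  unfold unit_vec, coord_x, along; cbn [fst snd]; intros Hu.
  transitivity (t * (fst u ^ 2 + snd u ^ 2)); [ring | rewrite Hu; ring].
Qed.

Lemma coord_y_along (o u : pt) (t : R) : coord_y o u (along o u t) = 0.
Proof. unfold coord_y, along; cbn [fst snd]; ring. Qed.

Lemma dist2_along (o u : pt) (s t : R) : unit_vec u ->
  dist2 (along o u s) (along o u t) = Rabs (s - t).
Proof.
  intros Hu.
  rewrite <- (sqrt_pow2 (dist2 _ _)) by apply dist2_nonneg.
  rewrite <- (coord_dist2 o u) by exact Hu.
  rewrite !coord_x_along, !coord_y_along by exact Hu.
  rewrite <- sqrt_Rsqr_abs; unfold Rsqr; f_equal; ring.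
Qed.

Lemma coord_near_along (o u p : pt) (t e : R) : unit_vec u ->
  dist2 p (along o u t) <= e -> Rabs (coord_x o u p - t) <= e /\ Rabs (coord_y o u p) <= e.
Proof.
  intros Hu Hp.
  pose proof (dist2_nonneg p (along o u t)) as Hd0.
  pose proof (coord_dist2 o u p (along o u t) Hu) as Hd.
  rewrite coord_x_along, coord_y_along, Rminus_0_r in Hd by exact Hu.
  pose proof (pow2_ge_0 (coord_x o u p - t)); pose proof (pow2_ge_0 (coord_y o u p)).
  split; apply Rabs_le_of_sqr_le; nra.
Qed.

Lemma collinear_along (q1 q2 q3 : pt) : collinear q1 q2 q3 -> 0 < dist2 q1 q2 ->
  exists o u t1 t2 t3, unit_vec u /\ q1 = along o u t1 /\ q2 = along o u t2 /\ q3 = along o u t3.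
Proof.
  intros Hcol HL.
  pose proof (dist2_sqr q1 q2) as HL2.
  set (L := dist2 q1 q2) in *.
  destruct q1 as [x1 y1], q2 as [x2 y2], q3 as [x3 y3].
  unfold collinear in Hcol; cbn [fst snd] in *.
  set (dot := (x3 - x1) * (x2 - x1) + (y3 - y1) * (y2 - y1)).
  exists (x1, y1), ((x2 - x1) / L, (y2 - y1) / L), 0, L, (dot / L).
  unfold unit_vec, along; cbn [fst snd]; repeat split.
  - replace (((x2 - x1) / L) ^ 2 + ((y2 - y1) / L) ^ 2) with
      (((x1 - x2) ^ 2 + (y1 - y2) ^ 2) / L ^ 2) by (field; lra).
    rewrite <- HL2; field; lra.
  - f_equal; ring.
  - f_equal; field; lra.
  - replace (dot / L * ((x2 - x1) / L)) with (dot * (x2 - x1) / L ^ 2) by (field; lra).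
    replace (dot / L * ((y2 - y1) / L)) with (dot * (y2 - y1) / L ^ 2) by (field; lra).
    (* dot * v = |v|^2 (q3 - q1) + cross * v^perp, and the cross product vanishes. *)
    replace (dot * (x2 - x1)) with ((x3 - x1) * L ^ 2 + (y2 - y1) * 0)
      by (rewrite <- Hcol, HL2; unfold dot; ring).
    replace (dot * (y2 - y1)) with ((y3 - y1) * L ^ 2 - (x2 - x1) * 0)
      by (rewrite <- Hcol, HL2; unfold dot; ring).
    f_equal; field; lra.
Qed.

(* The threshold on [e] is the smaller root of (d - 2 e)^2 = 4 r e, in rationalized form. *)
Lemma delta_below_threshold (r d e : R) : 0 < r -> 0 < d -> 0 <= e ->
  e < d ^ 2 / (2 * (r + d + sqrt ((r + d) ^ 2 - d ^ 2))) ->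
  2 * e < d /\ 4 * r * e < (d - 2 * e) ^ 2.
Proof.
  intros Hr Hd He H.
  set (S := sqrt ((r + d) ^ 2 - d ^ 2)) in *.
  assert (HS0 : 0 <= S) by apply sqrt_pos.
  assert (HS2 : S * S = (r + d) ^ 2 - d ^ 2) by (apply sqrt_sqrt; nra).
  assert (Ht : 2 * e * (r + d + S) < d ^ 2).
  { apply (Rmult_lt_compat_r (2 * (r + d + S))) in H; [| lra].
    unfold Rdiv in H. rewrite Rmult_assoc, Rinv_l in H by lra. lra. }
  assert (HrS : r < S) by nra.
  assert (Hroot : 2 * e < r + d - S).
  { assert ((r + d - S) * (r + d + S) = d ^ 2) by nra. nra. }
  split; [lra |].
  assert (S ^ 2 < (r + d - 2 * e) ^ 2) by nra. nra.
Qed.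

Theorem lemma7p4 (c : pt) (Rad d delta : R) (P1 P2 P3 Q1 Q2 Q3 : pt) :
  0 < Rad ->
  on_circle c Rad P1 -> on_circle c Rad P2 -> on_circle c Rad P3 ->
  0 < d ->
  d <= dist2 Q1 Q2 -> d <= dist2 Q1 Q3 -> d <= dist2 Q2 Q3 ->
  0 <= delta ->
  dist2 P1 Q1 <= delta -> dist2 P2 Q2 <= delta -> dist2 P3 Q3 <= delta ->
  delta < d ^ 2 / (2 * (Rad + d + sqrt ((Rad + d) ^ 2 - d ^ 2))) ->
  ~ collinear Q1 Q2 Q3.
Proof.
  intros HR C1 C2 C3 Hd D12 D13 D23 He E1 E2 E3 Hsmall Hcol.
  destruct (delta_below_threshold Rad d delta HR Hd He Hsmall) as [Hgap Hlt].
  destruct (collinear_along Q1 Q2 Q3 Hcol) as (o & u & t1 & t2 & t3 & Hu & -> & -> & ->);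
    [lra |].
  rewrite !dist2_along in D12, D13, D23 by exact Hu.
  destruct (coord_near_along o u P1 t1 delta Hu E1) as [X1 Y1].
  destruct (coord_near_along o u P2 t2 delta Hu E2) as [X2 Y2].
  destruct (coord_near_along o u P3 t3 delta Hu E3) as [X3 Y3].
  unfold on_circle in C1, C2, C3.
  apply (Rlt_not_le _ _ Hlt).
  apply (circle_strip_separated (coord_x o u c) (coord_y o u c) Rad delta (d - 2 * delta)
    (coord_x o u P1) (coord_y o u P1) (coord_x o u P2) (coord_y o u P2)
    (coord_x o u P3) (coord_y o u P3)); try lra.
  - exact (Rabs_sub_ge_perturb _ _ _ _ _ _ D12 X1 X2).
  - exact (Rabs_sub_ge_perturb _ _ _ _ _ _ D13 X1 X3).
  - exact (Rabs_sub_ge_perturb _ _ _ _ _ _ D23 X2 X3).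
  - rewrite coord_dist2, C1 by exact Hu; reflexivity.
  - rewrite coord_dist2, C2 by exact Hu; reflexivity.
  - rewrite coord_dist2, C3 by exact Hu; reflexivity.
Qed.
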